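(* Let $S$, $v$, $\hat S$ and $\mathrm{Lip}_a$ be as in the context. For every $f\in C^1(\mathbb R^2,\mathbb R)$, $$\mathrm{Lip}_a(f,x)\ge|P_{v(x)}\nabla f(x)|\qquad\text{for all }x\in\hat S.$$
   Context: Let $T_1=\begin{pmatrix}3/5&0\\0&1/5\end{pmatrix}$, $T_2=\begin{pmatrix}3/10&\sqrt3/10\\ \sqrt3/10&1/2\end{pmatrix}$, $T_3=\begin{pmatrix}3/10&-\sqrt3/10\\ -\sqrt3/10&1/2\end{pmatrix}$, $\bar A=(0,0)$, $\bar B=(1,1/\sqrt3)$, $\bar C=(1,-1/\sqrt3)$, $\psi_1(x)=\bar A+T_1(x-\bar A)$, $\psi_2(x)=\bar B+T_2(x-\bar B)$, $\psi_3(x)=\bar C+T_3(x-\bar C)$; the harmonic Sierpinski gasket $S$ is the unique nonempty compact set with $S=\bigcup_i\psi_i(S)$. Let $\Sigma=\{1,2,3\}^{\mathbb N}$, $\psi_{w_0\dots w_l}=\psi_{w_0}\circ\cdots\circ\psi_{w_l}$ (affine with constant derivative $D\psi_{w_0\dots w_l}$), and $\Phi:\Sigma\to S$, $\Phi(w)=$ the unique point of $\bigcap_l\psi_{w_0\dots w_l}(\triangle)$, $\triangle$ the closed triangle $\bar A\bar B\bar C$. Let $N=\{\psi_{w_0\dots w_l}(P): l\ge0,\ w\in\Sigma,\ P\in\{\bar A,\bar B,\bar C\}\}$ (countable; exactly the points with more than one coding). Kusuoka's measure: with $(\mathcal LA)(x)=\sum_i{}^tD\psi_iA_{\psi_i(x)}D\psi_i$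 on continuous symmetric-matrix fields, having simple positive eigenvalue $\beta$, let $\tau$ be the unique semipositive-definite symmetric-matrix-valued Borel measure on $S$ with $\mathrm{tr}\,\tau(S)=1$ and $\mathcal L^*\tau=\beta\tau$; $\tau(S)$ is a positive multiple of $Id$; $\kappa(E)=\mathrm{tr}\,\tau(E)$ is a non-atomic probability measure. For a unit vector $v$, $P_v$ is orthogonal projection onto $\mathbb Rv$; $\|A\|_{HS}^2=\mathrm{tr}({}^tAA)$. There is a Borel field of unit vectors $v$ with $\tau=P_{v(x)}\kappa$. Let $\tilde S$ be the set of $x=\Phi(w)$ at which $P_{v(x)}=\lim_{l\to\infty}D\psi_{w_0\dots w_{l-1}}{}^tD\psi_{w_0\dots w_{l-1}}/\|D\psi_{w_0\dots w_{l-1}}\|_{HS}^2$, and $\hat S=\tilde S\setminus N$ ($\kappa(\hat S)=1$). For $h:\mathbb R^2\to\mathbb R$ and $x\in S$, $\mathrm{Lip}_a(h,x)=\lim_{r\to0}\sup\{|h(y)-h(z)|/\|y-z\|: y\ne z,\ y,z\in S\cap B(x,r)\}$ (local Lipschitz constant computed on $S$). *)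

From HB Require Import structures.
From mathcomp Require Import all_boot all_order all_algebra.
From mathcomp Require Import all_classical all_reals all_analysis.
Set Implicit Arguments. Unset Strict Implicit. Unset Printing Implicit Defensive.
Import Order.TTheory GRing.Theory Num.Theory.
Import numFieldNormedType.Exports.
Local Open Scope classical_set_scope.
Local Open Scope ring_scope.

Section HSG.
Variable R : realType.

Definition V := 'cV[R]_2.
Definition Mat := 'M[R]_2.

Definition mkv (a b : R) : V := \col_(i < 2) (if i == ord0 then a else b).
Definition mkM (a b c d : R) : Mat :=
  \matrix_(i < 2, j < 2)
    (if i == ord0 then (if j == ord0 then a else b)
                  else (if j == ord0 then c else d)).

Definition eucl (u : V) : R := Num.sqrt (\sum_(i < 2) u i ord0 ^+ 2).

Definition s3 : R := Num.sqrt 3.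

Definition T1 : Mat := mkM (3/5) 0 0 (1/5).
Definition T2 : Mat := mkM (3/10) (s3/10) (s3/10) (1/2).
Definition T3 : Mat := mkM (3/10) (- (s3/10)) (- (s3/10)) (1/2).
Definition Abar : V := mkv 0 0.
Definition Bbar : V := mkv 1 (1 / s3).
Definition Cbar : V := mkv 1 (- (1 / s3)).

(* index i : 'I_3 with values 0,1,2 stands for the paper's 1,2,3 *)
Definition Tm (i : 'I_3) : Mat :=
  match val i with 0 => T1 | 1 => T2 | _ => T3 end.
Definition Pt (i : 'I_3) : V :=
  match val i with 0 => Abar | 1 => Bbar | _ => Cbar end.

Definition psi (i : 'I_3) (x : V) : V := Pt i + Tm i *m (x - Pt i).

(* psi_{w0 ... wl} = psi_{w0} o ... o psi_{wl} for the word [:: w0; ...; wl] *)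
Definition psiw (s : seq 'I_3) (x : V) : V := foldr psi x s.
(* its (constant) derivative T_{w0} ... T_{wl} *)
Definition Dpsiw (s : seq 'I_3) : Mat := foldr (fun i M => Tm i *m M) 1%:M s.

Definition triangle : set V :=
  [set p | exists a b c : R, [/\ 0 <= a, 0 <= b, 0 <= c, a + b + c = 1 &
                              p = a *: Abar + b *: Bbar + c *: Cbar]].

(* coding space Sigma = {1,2,3}^N; the prefix w_0 ... w_{l-1} is mkseq w l *)
Definition Sigma := nat -> 'I_3.

(* x = Phi(w): x is the (unique) point of \bigcap_l psi_{w0..wl}(triangle) *)
Definition is_Phi (w : Sigma) (x : V) : Prop :=
  forall l : nat, (psiw (mkseq w l.+1) @` triangle) x.

Definition Nset : set V :=
  [set x | exists (s : seq 'I_3) (P : 'I_3), s <> [::] /\ x = psiw s (Pt P)].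

Definition hs2 (M : Mat) : R := \tr (M^T *m M).
Definition Proj (u : V) : Mat := u *m u^T.

Definition tildeS (v : V -> V) : set V :=
  [set x | exists w : Sigma, is_Phi w x /\
     ((fun l : nat => (hs2 (Dpsiw (mkseq w l)))^-1 *:
                      (Dpsiw (mkseq w l) *m (Dpsiw (mkseq w l))^T))
        @ \oo --> Proj (v x))].
Definition hatS (v : V -> V) : set V := tildeS v `\` Nset.

Definition LipSup (S : set V) (h : V -> R) (x : V) (r : R) : \bar R :=
  ereal_sup [set e : \bar R | exists y z : V,
     [/\ S y /\ S z, y <> z, eucl (y - x) < r, eucl (z - x) < r &
         e = ((`|h y - h z| / eucl (y - z))%:E)]].
Definition Lip_a (S : set V) (h : V -> R) (x : V) : \bar R :=
  lim (LipSup S h x r @[r --> 0^'+]).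

Definition grad (f : V -> R) (x : V) : V :=
  \col_(i < 2) ('d f x (delta_mx i ord0 : V)).
Definition C1 (f : V -> R) : Prop :=
  (forall x : V, differentiable f x) /\ continuous (grad f).

Definition is_HSG (S : set V) : Prop :=
  [/\ compact S, S !=set0 & S = \bigcup_(i in [set: 'I_3]) (psi i @` S)].

Definition Lop (A : V -> Mat) (x : V) : Mat :=
  \sum_(i < 3) ((Tm i)^T *m A (psi i x) *m Tm i).

Definition symfield (S : set V) (A : V -> Mat) : Prop :=
  {within S, continuous A} /\ (forall x, S x -> (A x)^T = A x).

Definition simple_pos_eigval (S : set V) (beta : R) : Prop :=
  0 < beta /\
  exists A : V -> Mat, [/\ symfield S A, (exists x, S x /\ A x <> 0),
    (forall x, S x -> Lop A x = beta *: A x) &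
    (forall B : V -> Mat, symfield S B -> (forall x, S x -> Lop B x = beta *: B x) ->
       exists c : R, forall x, S x -> B x = c *: A x)].

Definition Vb := g_sigma_algebraType (@open V).
Definition borel (E : set V) : Prop := measurable (E : set Vb).

(* tau : semipositive-definite symmetric matrix valued Borel measure on S,
   tr tau(S) = 1, L^* tau = beta tau, where (L^* tau)(E) =
   sum_i Dpsi_i tau(psi_i^{-1} E) ^tDpsi_i (adjoint for the pairing
   <A, tau> = \int tr(A dtau)). *)
Definition is_kusuoka (S : set V) (beta : R) (tau : set V -> Mat) : Prop :=
  [/\ (forall E, borel E -> (tau E)^T = tau E /\
                  forall u : V, 0 <= (u^T *m tau E *m u) ord0 ord0),
      (forall F : nat -> set V, (forall n, borel (F n)) -> trivIset setT F ->
         (fun n : nat => \sum_(k < n) tau (F k)) @ \oo --> tau (\bigcup_n F n)),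
      (forall E, borel E -> tau E = tau (E `&` S)),
      \tr (tau S) = 1 &
      (forall E, borel E ->
         beta *: tau E = \sum_(i < 3) (Tm i *m tau (psi i @^-1` E) *m (Tm i)^T))].

End HSG.

From HB Require Import structures.
From mathcomp Require Import all_boot all_order all_algebra.
From mathcomp Require Import all_classical all_reals all_analysis.
From mathcomp Require Import lra ring.
Import Order.TTheory GRing.Theory Num.Theory.
Import numFieldNormedType.Exports.
Local Open Scope classical_set_scope.
Local Open Scope ring_scope.

(* At x = Phi(w) the cells psi_{w_0..w_l}(triangle) shrink to x, and their
   linear parts D_l satisfy D_l D_l^T / |D_l|_HS^2 --> P_v with v = v(x).  Hence
   |D_l^T v| is comparable to |D_l|_HS while D_l^T v^perp is negligible, and one of
   the three edges e of the triangle has |<D_l^T v, e>| >= |D_l^T v| / sqrt 2.  The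
   images y, z in S of the endpoints of that edge lie within 2 |D_l|_HS of x and
   y - z = D_l e is almost parallel to v, with length comparable to |D_l|_HS, so
   the first order expansion of f at x makes |f y - f z| / |y - z| close to
   |<v, grad f x>| = |P_v grad f x|. *)

Definition i0 : 'I_2 := ord0.
Definition i1 : 'I_2 := Ordinal (isT : 1 < 2)%N.

Lemma sum_ord2 (T : nmodType) (F : 'I_2 -> T) : \sum_i F i = F i0 + F i1.
Proof. by rewrite big_ord_recl big_ord1; congr (_ + F _); apply/val_inj. Qed.

Lemma ord2_ind (P : 'I_2 -> Prop) : P i0 -> P i1 -> forall i, P i.
Proof.
move=> P0 P1 [[|[|n]] lt_i2] //.
- by rewrite (_ : Ordinal lt_i2 = i0) //; apply/val_inj.
- by rewrite (_ : Ordinal lt_i2 = i1) //; apply/val_inj.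
Qed.

Definition j0 : 'I_3 := ord0.
Definition j1 : 'I_3 := Ordinal (isT : 1 < 3)%N.
Definition j2 : 'I_3 := Ordinal (isT : 2 < 3)%N.

Lemma ord3_ind (P : 'I_3 -> Prop) : P j0 -> P j1 -> P j2 -> forall i, P i.
Proof.
move=> P0 P1 P2 [[|[|[|n]]] lt_i3] //.
- by rewrite (_ : Ordinal lt_i3 = j0) //; apply/val_inj.
- by rewrite (_ : Ordinal lt_i3 = j1) //; apply/val_inj.
- by rewrite (_ : Ordinal lt_i3 = j2) //; apply/val_inj.
Qed.

Section Plane.
Context {R : realType}.
Implicit Types (u w y z t v G Y : V R) (D E M N : Mat R) (S : set (V R)).
Implicit Types (a p q : 'I_3) (s : seq 'I_3).

Definition dot u w : R := u i0 ord0 * w i0 ord0 + u i1 ord0 * w i1 ord0.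
Definition perp u : V R := mkv (- u i1 ord0) (u i0 ord0).

Lemma mulmx2E m n (A : 'M[R]_(m, 2)) (B : 'M[R]_(2, n)) i j :
  (A *m B) i j = A i i0 * B i0 j + A i i1 * B i1 j.
Proof. by rewrite !mxE sum_ord2. Qed.

Lemma euclE u : eucl u = Num.sqrt (dot u u).
Proof. by rewrite /eucl sum_ord2 !expr2. Qed.

Lemma dot_ge0 u : 0 <= dot u u.
Proof. by rewrite /dot addr_ge0 // -expr2 sqr_ge0. Qed.

Lemma eucl_le u (n : R) : 0 <= n -> dot u u <= n ^+ 2 -> eucl u <= n.
Proof. by move=> n0 un; rewrite euclE -(ger0_norm n0) -sqrtr_sqr ler_sqrt // sqr_ge0. Qed.

Lemma eucl_lt u (n : R) : 0 < n -> dot u u < n ^+ 2 -> eucl u < n.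
Proof. by move=> n0 un; rewrite euclE -(gtr0_norm n0) -sqrtr_sqr ltr_sqrt // exprn_gt0. Qed.

Lemma dotBr u w1 w2 : dot u (w1 - w2) = dot u w1 - dot u w2.
Proof. rewrite /dot !mxE; ring. Qed.

Lemma dotNr u w : dot u (- w) = - dot u w.
Proof. rewrite /dot !mxE; ring. Qed.

Lemma dotZr u (c : R) w : dot u (c *: w) = c * dot u w.
Proof. rewrite /dot !mxE; ring. Qed.

Lemma dot_trmx u D w : dot u (D *m w) = dot (D^T *m u) w.
Proof. rewrite /dot !mulmx2E !mxE; ring. Qed.

Lemma sqr_dot_le u w : dot u w ^+ 2 <= dot u u * dot w w.
Proof.
have := sqr_ge0 (u i0 ord0 * w i1 ord0 - u i1 ord0 * w i0 ord0).
rewrite /dot; nra.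
Qed.

Lemma dot_perpl v : dot (perp v) (perp v) = dot v v.
Proof. rewrite /dot !mxE /=; ring. Qed.

Lemma dot_perp v : dot v (perp v) = 0.
Proof. rewrite /dot !mxE /=; ring. Qed.

Lemma dot_decomp v G Y : dot v v = 1 ->
  dot G Y = dot v G * dot v Y + dot (perp v) G * dot (perp v) Y.
Proof.
rewrite /dot !mxE /= => v1.
rewrite -[LHS]mul1r -v1; ring.
Qed.

Lemma eucl_le_dot_perp v Y : dot v v = 1 ->
  eucl Y <= `|dot v Y| + `|dot (perp v) Y|.
Proof.
move=> v1; apply: eucl_le; first by rewrite addr_ge0.
rewrite (dot_decomp v Y Y v1) -!expr2 -(real_normK (num_real (dot v Y))).
rewrite -(real_normK (num_real (dot (perp v) Y))).
rewrite sqrrD; have := mulr_ge0 (normr_ge0 (dot v Y)) (normr_ge0 (dot (perp v) Y)).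
lra.
Qed.

Lemma dot_le_eucl v Y : dot v v = 1 -> `|dot v Y| <= eucl Y.
Proof.
move=> v1; rewrite euclE -sqrtr_sqr ler_sqrt ?dot_ge0 //.
by apply: le_trans (sqr_dot_le v Y) _; rewrite v1 mul1r.
Qed.

Lemma eucl_Proj_mul v G : dot v v = 1 -> eucl (Proj v *m G) = `|dot v G|.
Proof.
move=> v1; rewrite /Proj -mulmxA euclE.
have -> : dot (v *m (v^T *m G)) (v *m (v^T *m G)) = dot v G ^+ 2 * dot v v.
  rewrite /dot !mxE !big_ord1 !mulmx2E !mxE; ring.
by rewrite v1 mulr1 sqrtr_sqr.
Qed.

Lemma hs2E D : hs2 D = D i0 i0 ^+ 2 + D i0 i1 ^+ 2 + D i1 i0 ^+ 2 + D i1 i1 ^+ 2.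
Proof. rewrite /hs2 /mxtrace sum_ord2 !mulmx2E !mxE; ring. Qed.

Lemma col_mulmx {m n r} (A : 'M[R]_(m, n)) (B : 'M[R]_(n, r)) j :
  col j (A *m B) = A *m col j B.
Proof. by apply/matrixP => i k; rewrite !mxE; apply: eq_bigr => l _; rewrite !mxE. Qed.

Lemma hs2_col D : hs2 D = dot (col i0 D) (col i0 D) + dot (col i1 D) (col i1 D).
Proof. rewrite hs2E /dot !mxE; ring. Qed.

Lemma sqnorm_mulmx_le D u : dot (D *m u) (D *m u) <= hs2 D * dot u u.
Proof.
have := sqr_ge0 (D i0 i0 * u i1 ord0 - D i0 i1 * u i0 ord0).
have := sqr_ge0 (D i1 i0 * u i1 ord0 - D i1 i1 * u i0 ord0).
rewrite hs2E /dot !mulmx2E; nra.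
Qed.

Lemma s3_sqr : s3 R ^+ 2 = 3.
Proof. by rewrite sqr_sqrtr. Qed.

Lemma Tm_sqnorm_bounds a u :
  1/25 * dot u u <= dot (Tm R a *m u) (Tm R a *m u) <= 9/25 * dot u u.
Proof.
have s3E := s3_sqr; set u0 := u i0 ord0; set u1 := u i1 ord0.
elim/ord3_ind: a; rewrite /dot !mulmx2E !mxE /= -/u0 -/u1; apply/andP; split.
- nra.
- nra.
- have := sqr_ge0 (u0 + s3 R * u1); nra.
- have := sqr_ge0 (s3 R * u0 - u1); nra.
- have := sqr_ge0 (u0 - s3 R * u1); nra.
- have := sqr_ge0 (s3 R * u0 + u1); nra.
Qed.

Lemma hs2_Tm_bounds a D :
  1/25 * hs2 D <= hs2 (Tm R a *m D) <= 9/25 * hs2 D.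
Proof.
rewrite !hs2_col !col_mulmx.
have /andP[lb0 ub0] := Tm_sqnorm_bounds a (col i0 D).
have /andP[lb1 ub1] := Tm_sqnorm_bounds a (col i1 D).
apply/andP; split; lra.
Qed.

Lemma hs2_Dpsiw_gt0 s : 0 < hs2 (Dpsiw R s).
Proof.
elim: s => [|a s IH] /=; first by rewrite hs2E !mxE /=; lra.
have /andP[+ _] := hs2_Tm_bounds a (Dpsiw R s); lra.
Qed.

Lemma hs2_Dpsiw_le s : hs2 (Dpsiw R s) <= 2 * (9/25) ^+ size s.
Proof.
elim: s => [|a s IH] /=; first by rewrite hs2E !mxE /=; lra.
have /andP[_ +] := hs2_Tm_bounds a (Dpsiw R s); rewrite exprS; nra.
Qed.

Lemma hs2_Dpsiw_small (e : R) : 0 < e ->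
  \forall l \near \oo, forall s, size s = l -> hs2 (Dpsiw R s) < e.
Proof.
move=> e0; have : `|9/25 : R| < 1 by rewrite ger0_norm; lra.
move=> /cvg_expr /cvgr_dist_lt /(_ (e / 2) (divr_gt0 e0 (ltr0Sn _ 1))).
apply: filterS => l small s sl; apply: le_lt_trans (hs2_Dpsiw_le s) _.
move: small; rewrite sl sub0r normrN ger0_norm ?exprn_ge0 //; lra.
Qed.

Lemma entry_le_mxnorm {m n} (A : 'M[R]_(m, n)) i j : `|A i j| <= `|A|.
Proof.
by rewrite [leRHS]/Num.Def.normr /= mx_normrE; apply/bigmax_geP; right; exists (i, j).
Qed.

Lemma mxnorm_le_eucl u : `|u| <= eucl u.
Proof.
rewrite [leLHS]/Num.Def.normr /= mx_normrE; apply: bigmax_le => [|[i j] _] /=.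
  by rewrite euclE sqrtr_ge0.
rewrite (ord1 j) euclE -sqrtr_sqr ler_sqrt ?dot_ge0 // /dot -!expr2.
by elim/ord2_ind: i; rewrite ?lerDl ?lerDr sqr_ge0.
Qed.

Lemma inv_s3_sqr : (1 / s3 R) ^+ 2 = 1/3.
Proof. by rewrite expr_div_n s3_sqr expr1n. Qed.

Lemma vertex_in_triangle p : triangle (Pt R p).
Proof.
elim/ord3_ind: p; [exists 1, 0, 0|exists 0, 1, 0|exists 0, 0, 1];
  by split; rewrite ?ler01 ?lexx //= ?scale0r ?scale1r ?addr0 ?add0r.
Qed.

Lemma triangle_vertex_sqdist p t : triangle t -> dot (Pt R p - t) (Pt R p - t) <= 4.
Proof.
case=> a [b [c [a0 b0 c0 abc ->]]]; have k2 := inv_s3_sqr.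
elim/ord3_ind: p; rewrite /dot !mxE /=; move: (1 / s3 R) k2 => k k2.
- have : (k * (b - c)) ^+ 2 <= 1 by rewrite exprMn k2; nra.
  nra.
- have : (k * (1 - b + c)) ^+ 2 <= 4/3 by rewrite exprMn k2; nra.
  nra.
- have : (k * (1 + b - c)) ^+ 2 <= 4/3 by rewrite exprMn k2; nra.
  nra.
Qed.

Lemma exists_edge u : exists p q, dot u u <= 2 * dot u (Pt R p - Pt R q) ^+ 2.
Proof.
have k2 := inv_s3_sqr; set u0 := u i0 ord0; set u1 := u i1 ord0.
have [u10|u01] := lerP (u1 ^+ 2) (u0 ^+ 2).
- have [e10|e20] := lerP (dot u u) (2 * dot u (Pt R j1 - Pt R j0) ^+ 2).
    by exists j1, j0.
  exists j2, j0; move: e20; rewrite /dot !mxE /= -/u0 -/u1; nra.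
- exists j1, j2; rewrite /dot !mxE /= -/u0 -/u1; nra.
Qed.

Lemma psiw_sub s y z : psiw s y - psiw s z = Dpsiw R s *m (y - z).
Proof.
elim: s => [|a s IH] /=; first by rewrite mul1mx.
by rewrite /psi opprD addrACA subrr add0r -mulmxBr opprB addrA subrK IH mulmxA.
Qed.

Lemma psiw_vertex n a : psiw (nseq n a) (Pt R a) = Pt R a.
Proof. by elim: n => [|n /= ->] //; rewrite /psi subrr mulmx0 addr0. Qed.

Lemma HSG_psiw S s y : is_HSG S -> S y -> S (psiw s y).
Proof.
case=> _ _ SE; elim: s => [|a s IH] //= Sy.
by rewrite SE; exists a => //; exists (psiw s y) => //; apply: IH.
Qed.

(* [Pt a] is the fixed point of the contraction [psi a], hence the limit of [psi a^n y]. *)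
Lemma HSG_vertex S a : is_HSG S -> S (Pt R a).
Proof.
move=> HS; have [/(compact_closed (@norm_hausdorff _ _)) Sclosed [y Sy] _] := HS.
apply: (closed_cvg (F := \oo) _ Sclosed _ (u_ := fun n => psiw (nseq n a) y)).
  by near=> n; apply: HSG_psiw.
apply/cvgrPdist_lt => e e0; set c := dot (y - Pt R a) (y - Pt R a).
have c1 : 0 < c + 1 by rewrite ltr_pwDr ?dot_ge0.
have := hs2_Dpsiw_small _ (divr_gt0 (exprn_gt0 2 e0) c1).
apply: filterS => n /(_ (nseq n a) (size_nseq n a)); rewrite ltr_pdivlMr //.
set h := hs2 _ => small; rewrite -normrN opprB.
apply: le_lt_trans (mxnorm_le_eucl _) _; apply: eucl_lt => //.
rewrite -(psiw_vertex n a) psiw_sub; apply: le_lt_trans (sqnorm_mulmx_le _ _) _.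
have := hs2_Dpsiw_gt0 (nseq n a); rewrite -/h -/c; lra.
Unshelve. all: by end_near.
Qed.

Definition gram D : Mat R := (hs2 D)^-1 *: (D *m D^T).

Lemma tr_gram D : 0 < hs2 D -> \tr (gram D) = 1.
Proof. by move=> hD; rewrite mxtraceZ mxtrace_mulC mulVf ?gt_eqF. Qed.

Lemma tr_Proj v : \tr (Proj v) = dot v v.
Proof. by rewrite /Proj /mxtrace sum_ord2 !mxE !big_ord1 !mxE. Qed.

Lemma dot_gram D u : dot u (gram D *m u) = (hs2 D)^-1 * dot (D^T *m u) (D^T *m u).
Proof. by rewrite -scalemxAl dotZr -mulmxA dot_trmx. Qed.

Lemma dot_Proj v u : dot u (Proj v *m u) = dot v u ^+ 2.
Proof. rewrite /Proj /dot !mulmx2E !mxE !big_ord1 !mxE; ring. Qed.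

Lemma tr_dist_le M N : `|\tr M - \tr N| <= 2 * `|M - N|.
Proof.
rewrite -linearB /= /mxtrace sum_ord2 mulr2n mulrDl !mul1r.
by apply: le_trans (ler_normD _ _) _; apply: lerD; apply: entry_le_mxnorm.
Qed.

Lemma dot_mulmx_le E u : dot u (E *m u) <= 2 * `|E| * dot u u.
Proof.
set e := `|E|; rewrite /dot !mulmx2E; set u0 := u i0 ord0; set u1 := u i1 ord0.
have bound i j : - e <= E i j <= e by rewrite -ler_norml entry_le_mxnorm.
have /andP[_ E00] := bound i0 i0; have /andP[_ E11] := bound i1 i1.
have /andP[E01l E01u] := bound i0 i1; have /andP[E10l E10u] := bound i1 i0.
have hint (x c : R) : 0 <= c -> 0 <= x ^+ 2 * c by exact: mulr_ge0 (sqr_ge0 x).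
(* [e (u0^2 + u1^2) - u0 u1 (E01 + E10)] is a quarter of the sum of these two terms *)
have := hint (u0 - u1) (2 * e + (E i0 i1 + E i1 i0)) ltac:(lra).
have := hint (u0 + u1) (2 * e - (E i0 i1 + E i1 i0)) ltac:(lra).
have := hint u0 (e - E i0 i0) ltac:(lra); have := hint u1 (e - E i1 i1) ltac:(lra).
nra.
Qed.

Lemma dot_mulmx_dist_le M N u :
  `|dot u (M *m u) - dot u (N *m u)| <= 2 * `|M - N| * dot u u.
Proof.
rewrite -dotBr -mulmxBl; apply/ler_normlP; split; last exact: dot_mulmx_le.
by have := dot_mulmx_le (N - M) u; rewrite -opprB normrN mulNmx dotNr lerNl.
Qed.

Lemma gram_cvg_unit {D : nat -> Mat R} {v} : (forall l, 0 < hs2 (D l)) ->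
  (fun l => gram (D l)) @ \oo --> Proj v -> dot v v = 1.
Proof.
move=> Dpos /cvgr_dist_lt Dcvg; apply/eqP; rewrite -subr_eq0 -normr_le0.
apply/ler_addgt0Pr => e e0; rewrite add0r.
have [l _ /(_ l (leqnn l)) close] := Dcvg _ (divr_gt0 e0 (ltr0Sn _ 1)).
rewrite -(tr_gram _ (Dpos l)) -tr_Proj.
by apply: le_trans (tr_dist_le _ _) _; lra.
Qed.

Lemma gram_cvg_near {D : nat -> Mat R} {v} u e : (forall l, 0 < hs2 (D l)) ->
  (fun l => gram (D l)) @ \oo --> Proj v -> 0 < e ->
  \forall l \near \oo, `|dot ((D l)^T *m u) ((D l)^T *m u) - dot v u ^+ 2 * hs2 (D l)|
                         <= e * dot u u * hs2 (D l).
Proof.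
move=> Dpos /cvgr_dist_lt Dcvg e0.
apply: filterS (Dcvg _ (divr_gt0 e0 (ltr0Sn _ 1))) => l; rewrite distrC => close.
set h := hs2 (D l); have h0 : 0 < h := Dpos l.
have -> : dot ((D l)^T *m u) ((D l)^T *m u) - dot v u ^+ 2 * h =
    h * (dot u (gram (D l) *m u) - dot u (Proj v *m u)).
  by rewrite dot_gram dot_Proj mulrBr mulrA mulfV ?gt_eqF // mul1r mulrC.
rewrite normrM gtr0_norm // mulrC ler_pM2r //.
apply: le_trans (dot_mulmx_dist_le _ _ _) _.
by rewrite ler_wpM2r ?dot_ge0 //; lra.
Qed.

Lemma Lip_a_ge S (f : V R -> R) x (g : R) :
  (forall r, 0 < r -> (g%:E <= LipSup S f x r)%E) -> (g%:E <= Lip_a S f x)%E.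
Proof.
move=> LipSup_ge; rewrite /Lip_a.
have LipSup_nd : {in `]0, +oo[ &, nondecreasing_fun (LipSup S f x)}.
  move=> r r' _ _ rr'; apply: ereal_sup_le => _ [y [z [Syz yz yx zx ->]]].
  by exists y, z; split => //; apply: lt_le_trans rr'.
rewrite (cvg_lim (@ereal_hausdorff R) (nondecreasing_at_right_cvge _ _ LipSup_nd)) //.
by apply/ereal_infP => _ [r + <-] => /[!set_itvoy] /LipSup_ge.
Qed.

Lemma diff_grad (f : V R -> R) x k : 'd f x k = dot (grad f x) k.
Proof.
have -> : k = k i0 ord0 *: (delta_mx i0 ord0 : V R) + k i1 ord0 *: delta_mx i1 ord0.
  by apply/matrixP => i j; rewrite (ord1 j) !mxE; elim/ord2_ind: i; rewrite /= ?mulr1 ?mulr0 ?addr0 ?add0r.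
rewrite linearD !linearZ /dot !mxE /= !mulr1 !mulr0 addr0 add0r.
by congr (_ + _); apply: mulrC.
Qed.

Lemma diff_taylor {f : V R -> R} {x} : differentiable f x ->
  forall eta : R, 0 < eta -> exists2 rho : R, 0 < rho & forall y, eucl (y - x) < rho ->
    `|f y - f x - dot (grad f x) (y - x)| <= eta * eucl (y - x).
Proof.
move=> fdiff eta eta0; have /eqaddoP/(_ eta eta0)/nbhs_normP[rho rho0 near_x] := diff_locally fdiff.
exists rho => // y yx; rewrite -diff_grad.
have /near_x /= : ball_ Num.Def.normr (0 : V R) rho (y - x).
  by rewrite /ball_ /= sub0r normrN; apply: le_lt_trans (mxnorm_le_eucl _) yx.
rewrite !fctE subrK opprD addrA => /le_trans; apply.
by rewrite ler_wpM2l ?mxnorm_le_eucl // ltW.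
Qed.

Lemma diff_quotient_ge {f : V R -> R} {x v} : differentiable f x -> dot v v = 1 ->
  forall eps : R, 0 < eps -> exists2 kap : R, 0 < kap & exists2 rho : R, 0 < rho &
  forall (n : R) y z, n < rho -> eucl (y - x) <= n -> eucl (z - x) <= n ->
    n <= 4 * `|dot v (y - z)| -> `|dot (perp v) (y - z)| <= kap * n ->
    (`|dot v (grad f x)| - eps) * eucl (y - z) <= `|f y - f z|.
Proof.
move=> fdiff v1 eps eps0; set G := grad f x.
set g : R := `|dot v G|; set gp : R := `|dot (perp v) G|.
have g0 : 0 <= g := normr_ge0 _; have gp0 : 0 <= gp := normr_ge0 _.
have c0 : 0 < g + gp + 1 by lra.
(* kap and the Taylor tolerance eps/16 each make an error of at most eps n / 8,
   and together these are absorbed by eps |<v, y - z>| >= eps n / 4 *)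
set kap := eps / (8 * (g + gp + 1)).
have kapE : (g + gp + 1) * kap = eps / 8 by rewrite /kap; field; rewrite gt_eqF.
exists kap; first by rewrite divr_gt0 // mulr_gt0.
have [rho rho0 taylor] := diff_taylor fdiff _ (divr_gt0 eps0 (ltr0Sn _ 15)).
exists rho => // n y z nrho yx zx sv sp.
have n0 : 0 <= n by apply: le_trans yx; rewrite euclE sqrtr_ge0.
set Y := y - z; set s : R := `|dot v Y|; set p : R := `|dot (perp v) Y|.
have Ferr : `|f y - f z - dot G Y| <= eps / 16 * (2 * n).
  have := taylor y (le_lt_trans yx nrho); have := taylor z (le_lt_trans zx nrho).
  have -> : f y - f z - dot G Y =
      (f y - f x - dot G (y - x)) - (f z - f x - dot G (z - x)).
    by rewrite /Y !dotBr; ring.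
  move=> ez ey; apply: le_trans (ler_normB _ _) _.
  have := ler_wpM2l (ltW (divr_gt0 eps0 (ltr0Sn _ 15))) yx.
  have := ler_wpM2l (ltW (divr_gt0 eps0 (ltr0Sn _ 15))) zx.
  lra.
have GY : g * s - gp * p <= `|dot G Y|.
  by rewrite (dot_decomp _ _ _ v1); apply: le_trans (lerB_normD _ _); rewrite !normrM.
have perp_small : (g + gp) * p <= eps / 8 * n.
  rewrite -kapE -mulrA; apply: le_trans (_ : _ <= (g + gp + 1) * p) _.
    by rewrite ler_wpM2r ?normr_ge0 // lerDl.
  by rewrite ler_wpM2l // ltW.
have [g_lt|g_ge] := ltrP g eps.
  by apply: le_trans (normr_ge0 _); rewrite mulr_le0_ge0 ?euclE ?sqrtr_ge0 // subr_le0 ltW.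
have eY : (g - eps) * eucl Y <= (g - eps) * (s + p).
  by rewrite ler_wpM2l ?subr_ge0 //; apply: eucl_le_dot_perp.
have epsn : eps * n <= eps * (4 * s) by apply: ler_wpM2l; [exact: ltW | exact: sv].
have p0 : 0 <= eps * p := mulr_ge0 (ltW eps0) (normr_ge0 _).
have := lerB_normD (dot G Y) (f y - f z - dot G Y); rewrite subrKC.
lra.
Qed.

Lemma cell_chord D v (d : R) :
  hs2 D <= 2 * dot (D^T *m v) (D^T *m v) ->
  dot (D^T *m perp v) (D^T *m perp v) <= d * hs2 D ->
  exists p q, hs2 D <= 4 * dot v (D *m (Pt R p - Pt R q)) ^+ 2 /\
              dot (perp v) (D *m (Pt R p - Pt R q)) ^+ 2 <= 4 * d * hs2 D.
Proof.
move=> Dv Dperp; have [p [q pq]] := exists_edge (D^T *m v).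
exists p, q; rewrite !dot_trmx; split; first lra.
apply: le_trans (sqr_dot_le _ _) _; rewrite -mulrA [4 * _]mulrC.
apply: ler_pM; rewrite ?dot_ge0 //.
exact: triangle_vertex_sqdist (vertex_in_triangle q).
Qed.

End Plane.

Section LocalLipschitz.
Variables (R : realType) (S : set (V R)) (f : V R -> R) (x v : V R) (w : Sigma).
Hypotheses (HS : is_HSG S) (fdiff : differentiable f x) (xPhi : is_Phi w x).
Let D l := Dpsiw R (mkseq w l).
Hypothesis gram_cvg : (fun l => gram (D l)) @ \oo --> Proj v.

Let D_gt0 l : 0 < hs2 (D l) := hs2_Dpsiw_gt0 _.
Let v1 : dot v v = 1 := gram_cvg_unit D_gt0 gram_cvg.

Lemma small_cell_chord {kap rho : R} : 0 < kap -> 0 < rho ->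
  exists s p q (n : R), let y := psiw s (Pt R p) in let z := psiw s (Pt R q) in
  [/\ 0 < n < rho, eucl (y - x) <= n, eucl (z - x) <= n,
      n <= 4 * `|dot v (y - z)| & `|dot (perp v) (y - z)| <= kap * n].
Proof.
move=> kap0 rho0.
have [N _ /(_ N.+1 (leqnSn N))[small Dv Dperp]] : \forall l \near \oo,
   [/\ 4 * hs2 (D l) < rho ^+ 2,
    `|dot ((D l)^T *m v) ((D l)^T *m v) - dot v v ^+ 2 * hs2 (D l)|
      <= 1/2 * dot v v * hs2 (D l) &
    `|dot ((D l)^T *m perp v) ((D l)^T *m perp v) - dot v (perp v) ^+ 2 * hs2 (D l)|
      <= kap ^+ 2 * dot (perp v) (perp v) * hs2 (D l)].
  near=> l; split; near: l.
  - have := hs2_Dpsiw_small _ (divr_gt0 (exprn_gt0 2 rho0) (ltr0Sn _ 3)).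
    by apply: filterS => l /(_ (mkseq w l) (size_mkseq _ _)); rewrite /D; lra.
  - exact: gram_cvg_near.
  - by apply: gram_cvg_near; rewrite ?exprn_gt0.
rewrite dot_perp dot_perpl v1 expr1n expr0n /= mul0r subr0 in Dv Dperp.
have [t tri xt] := xPhi N; set h := hs2 (D N.+1) in small Dv Dperp.
have h0 : 0 < h := D_gt0 _.
rewrite ger0_norm ?dot_ge0 // mulr1 in Dperp.
have {}Dv : h <= 2 * dot ((D N.+1)^T *m v) ((D N.+1)^T *m v).
  by move: Dv; rewrite ler_norml; lra.
have [p [q [chord_v chord_perp]]] := cell_chord _ _ _ Dv Dperp.
exists (mkseq w N.+1), p, q, (Num.sqrt (4 * h)) => y z.
have h4 : 0 <= 4 * h by rewrite mulr_ge0 // ltW.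
rewrite -psiw_sub -/y -/z in chord_v chord_perp.
have near_x a : eucl (psiw (mkseq w N.+1) (Pt R a) - x) <= Num.sqrt (4 * h).
  rewrite -xt psiw_sub euclE ler_sqrt //; apply: le_trans (sqnorm_mulmx_le _ _) _.
  by rewrite mulrC ler_wpM2r ?(ltW h0) //; apply: triangle_vertex_sqdist.
split; [|exact: near_x|exact: near_x| |].
- by rewrite sqrtr_gt0 mulr_gt0 //= -(gtr0_norm rho0) -sqrtr_sqr ltr_sqrt ?exprn_gt0.
- have : Num.sqrt (4 * h) <= Num.sqrt ((4 * dot v (y - z)) ^+ 2).
    by rewrite ler_sqrt ?sqr_ge0 // exprMn; lra.
  by rewrite sqrtr_sqr normrM ger0_norm.
- have : Num.sqrt (dot (perp v) (y - z) ^+ 2) <= Num.sqrt (kap ^+ 2 * (4 * h)).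
    by rewrite ler_sqrt ?mulr_ge0 ?sqr_ge0 //; lra.
  by rewrite sqrtr_sqr sqrtrM ?sqr_ge0 // sqrtr_sqr (gtr0_norm kap0).
Unshelve. all: by end_near.
Qed.

Lemma Lip_a_ge_dot_grad : (`|dot v (grad f x)|%:E <= Lip_a S f x)%E.
Proof.
apply: Lip_a_ge => r r0; apply/lee_subgt0Pr => eps eps0; rewrite -EFinB.
have [kap kap0 [rho rho0 quotient_ge]] := diff_quotient_ge fdiff v1 _ eps0.
have r_rho : 0 < Num.min r rho by rewrite lt_min r0 rho0.
have [s [p [q [n [/andP[n0 +] yx zx sv sp]]]]] := small_cell_chord kap0 r_rho.
rewrite lt_min => /andP[nr nrho].
set y := psiw s (Pt R p) in yx sv sp *; set z := psiw s (Pt R q) in zx sv sp *.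
have dot_gt0 : 0 < `|dot v (y - z)| by lra.
have yz0 : 0 < eucl (y - z) := lt_le_trans dot_gt0 (dot_le_eucl _ _ v1).
apply: (@le_trans _ _ ((`|f y - f z| / eucl (y - z))%:E)).
  by rewrite lee_fin ler_pdivlMr //; apply: (quotient_ge n).
apply: ereal_sup_ubound; exists y, z; split => //.
- by split; apply: HSG_psiw => //; apply: HSG_vertex.
- by move=> yz; move: yz0; rewrite yz subrr euclE /dot !mxE mulr0 addr0 sqrtr0 ltxx.
- exact: le_lt_trans nr.
- exact: le_lt_trans nr.
Qed.

End LocalLipschitz.

Theorem lemma4p5 (R : realType) (S : set (V R)) (beta : R)
  (tau : set (V R) -> Mat R) (kappa : {measure set (Vb R) -> \bar R})
  (v : V R -> V R) :
  is_HSG S ->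
  simple_pos_eigval S beta ->
  is_kusuoka S beta tau ->
  (forall E, borel E -> kappa E = (\tr (tau E))%:E) ->
  (forall x, S x -> ((v x)^T *m v x) ord0 ord0 = 1) ->
  (forall i : 'I_2, measurable_fun (S : set (Vb R)) (fun x : Vb R => v x i ord0)) ->
  (forall E, borel E -> forall i j : 'I_2,
     ((tau E i j)%:E = \int[kappa]_(x in (E : set (Vb R))) (v x i ord0 * v x j ord0)%:E)%E) ->
  forall f : V R -> R, C1 f ->
  forall x, hatS v x ->
    ((eucl (Proj (v x) *m grad f x))%:E <= Lip_a S f x)%E.
Proof.
move=> HS _ _ _ _ _ _ f [fdiff _] x [[w [xPhi gram_cvg]] _].
have v1 := gram_cvg_unit (fun l => hs2_Dpsiw_gt0 (mkseq w l)) gram_cvg.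
by rewrite eucl_Proj_mul //; apply: Lip_a_ge_dot_grad.
Qed.
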